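(* Every Bohr regular Lawson paratopological group is a topological group.
   Context: All topological spaces are Hausdorff. A paratopological group is a group with a Hausdorff topology making multiplication continuous; a topological group additionally has continuous inversion. A paratopological group is Lawson if it has a neighborhood base at the unit consisting of subsemigroups. A topological group $K$ is totally bounded if for each neighborhood $U$ of the unit there is a finite $F$ with $FU=UF=K$. A continuous map $h:X\to Y$ is regular if for each $x\in X$ and neighborhood $U$ of $x$ there is a closed $F\subset Y$ such that $h^{-1}(F)$ is a closed neighborhood of $x$ contained in $U$. A paratopological group is Bohr regular if it admits a regular continuous homomorphism onto a totally bounded topological group. *)

From HB Require Import structures.
From mathcomp Require Import all_boot monoid.
From mathcomp Require Import all_classical topology.

Set Implicit Arguments.
Unset Strict Implicit.
Unset Printing Implicit Defensive.

Local Open Scope classical_set_scope.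
Local Open Scope group_scope.

#[short(type="topGroupType")]
HB.structure Definition TopGroup := {G of Group G & Topological G}.

Definition paratopological_group (G : topGroupType) : Prop :=
  hausdorff_space G /\ continuous (fun p : G * G => (p.1 * p.2)%g).

Definition topological_group (G : topGroupType) : Prop :=
  paratopological_group G /\ continuous (fun x : G => (x^-1)%g).

Definition subsemigroup (G : topGroupType) (V : set G) : Prop :=
  forall x y, V x -> V y -> V (x * y)%g.

Definition lawson (G : topGroupType) : Prop :=
  forall U : set G, nbhs (1%g : G) U ->
    exists V : set G, [/\ nbhs (1%g : G) V, V `<=` U & subsemigroup V].

Definition totally_bounded_group (K : topGroupType) : Prop :=
  forall U : set K, nbhs (1%g : K) U ->
    exists F : set K, [/\ finite_set F,
      (forall x : K, exists f u, [/\ F f, U u & x = (f * u)%g]) &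
      (forall x : K, exists u f, [/\ U u, F f & x = (u * f)%g])].

Definition regular_map (X Y : topologicalType) (h : X -> Y) : Prop :=
  forall (x : X) (U : set X), nbhs x U ->
    exists F : set Y, [/\ closed F, closed (h @^-1` F), nbhs x (h @^-1` F)
                        & h @^-1` F `<=` U].

Definition group_hom (G K : topGroupType) (h : G -> K) : Prop :=
  forall x y : G, h (x * y)%g = (h x * h y)%g.

Definition bohr_regular (G : topGroupType) : Prop :=
  exists (K : topGroupType) (h : G -> K),
    [/\ topological_group K, totally_bounded_group K, group_hom h,
        continuous h /\ regular_map h & (forall k : K, exists x : G, h x = k)].

From HB Require Import structures.
From mathcomp Require Import all_boot monoid.
From mathcomp Require Import all_classical topology.

(* For a regular homomorphism h onto a totally bounded group K, every
   neighborhood U of 1 contains a neighborhood h^-1(F) of 1 with F closed, and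
   by the Lawson property a subsemigroup neighborhood V of 1 inside it.  For
   v in V all powers h(v)^n lie in F, and total boundedness makes h(v)^-1 a
   limit of such powers, so h(v^-1) lies in the closed set F, i.e. v^-1 is in
   U.  Thus inversion is continuous at 1, hence everywhere by translation. *)

Set Implicit Arguments.
Unset Strict Implicit.
Unset Printing Implicit Defensive.

Local Open Scope classical_set_scope.
Local Open Scope group_scope.

Lemma finite_set_repeats (T : Type) (F : set T) (c : nat -> T) :
  finite_set F -> (forall n, F (c n)) -> exists i j, (i < j)%N /\ c i = c j.
Proof.
move=> finF Fc; apply: contrapT => norepeat.
have c_inj : {in [set: nat] &, injective c}.
  move=> i j _ _ cij; case: (ltngtP i j) => // [ltij|ltji]; exfalso.
  - by apply: norepeat; exists i, j.
  - by apply: norepeat; exists j, i.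
have fin_range : finite_set (c @` [set: nat]).
  by apply: sub_finite_set finF => _ [n _ <-].
apply: infinite_nat; apply: card_le_finite fin_range.
by have /card_eqPle[] := inj_card_eq c_inj.
Qed.

Section GroupHom.
Variables (G K : topGroupType) (h : G -> K).
Hypothesis hom_h : group_hom h.

Lemma group_hom1 : h 1 = 1.
Proof. by apply: (mulIg (h 1)); rewrite mul1g -hom_h mulg1. Qed.

Lemma group_homV x : h x^-1 = (h x)^-1.
Proof. by apply: (mulgI (h x)); rewrite -hom_h !mulgV group_hom1. Qed.

Lemma group_homX x n : h (x ^+ n) = h x ^+ n.
Proof. by elim: n => [|n IH]; rewrite ?group_hom1 // !expgS hom_h IH. Qed.

End GroupHom.

Lemma subsemigroupX (G : topGroupType) (V : set G) x n :
  subsemigroup V -> V x -> V (x ^+ n.+1).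
Proof. by move=> semV Vx; elim: n => [|n IH] //; rewrite expgS; apply: semV. Qed.

Section ContinuousMultiplication.
Variable G : topGroupType.
Hypothesis mul_cont : continuous (fun p : G * G => p.1 * p.2).

Lemma nbhs_mul (a b : G) (U : set G) : nbhs (a * b) U ->
  exists A B, [/\ nbhs a A, nbhs b B & forall x y, A x -> B y -> U (x * y)].
Proof.
move=> /(@mul_cont (a, b)) [[A B] /= [nA nB] AB_U].
by exists A, B; split=> // x y Ax By; apply: (AB_U (x, y)).
Qed.

Lemma nbhs_lmul (a b : G) (U : set G) : nbhs (a * b) U ->
  nbhs b [set y | U (a * y)].
Proof.
move=> /nbhs_mul [A [B [nA nB AB_U]]].
by apply: filterS nB => y By; apply: AB_U => //; apply: nbhs_singleton.
Qed.

Lemma nbhs_rmul (a b : G) (U : set G) : nbhs (a * b) U ->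
  nbhs a [set x | U (x * b)].
Proof.
move=> /nbhs_mul [A [B [nA nB AB_U]]].
by apply: filterS nA => x Ax; apply: AB_U => //; apply: nbhs_singleton.
Qed.

Lemma continuous_invg_from1 :
  {for 1, continuous (fun x : G => x^-1)} -> continuous (fun x : G => x^-1).
Proof.
move=> inv1 x U nU.
have nU1 : nbhs (1 : G) [set w | U (w * x^-1)].
  by apply: nbhs_rmul; rewrite mul1g.
have nV : nbhs (1 : G) [set v | U (v^-1 * x^-1)].
  by move: nU1; rewrite -[in nbhs 1 _]invg1 => /inv1.
have := @nbhs_lmul x^-1 x [set z | U (z^-1 * x^-1)].
rewrite mulVg => /(_ nV).
by apply: filterS => y; rewrite /= invgM invgK mulgK.
Qed.

End ContinuousMultiplication.

Section TotallyBoundedGroup.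
Variable K : topGroupType.
Hypotheses (topK : topological_group K) (tbK : totally_bounded_group K).

(* Two powers s^i, s^j (i < j) lie in one translate f N of N = A^-1 :&: B,
   so s^(j - i) = (s^i)^-1 s^j lies in N^-1 N, which is inside A B. *)
Lemma totally_bounded_recurrence (s : K) (W : set K) : nbhs 1 W ->
  exists n, (0 < n)%N /\ W (s ^+ n).
Proof.
have [[_ mul_cont] inv_cont] := topK.
rewrite -[in nbhs _ W](mulg1 1) => /(nbhs_mul mul_cont) [A [B [nA nB AB_W]]].
have nA' : nbhs (1 : K) [set u | A u^-1] by apply: inv_cont; rewrite invg1.
have [F [finF cover _]] := tbK (filterI nA' nB).
have /choice [c cP] : forall n, exists p : K * K,
    [/\ F p.1, ([set u | A u^-1] `&` B) p.2 & s ^+ n = p.1 * p.2].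
  by move=> n; have [f [u [Ff Uu ->]]] := cover (s ^+ n); exists (f, u).
have Fc n : F (c n).1 by have [] := cP n.
have [i [j [ltij cij]]] := finite_set_repeats finF Fc.
exists (j - i)%N; split; first by rewrite subn_gt0.
have -> : s ^+ (j - i) = (s ^+ i)^-1 * s ^+ j.
  by rewrite -(subnKC (ltnW ltij)) expgnDr mulKg addKn.
have [_ [Au _] ->] := cP i; have [_ [_ Bu'] ->] := cP j.
by rewrite cij invgM -mulgA mulKg; apply: AB_W.
Qed.

Lemma invg_closure_powers (s : K) : closure (range (fun n => s ^+ n)) s^-1.
Proof.
have [[_ mul_cont] _] := topK.
move=> B nB; have nW : nbhs (1 : K) [set w | B (s^-1 * w)].
  by apply: nbhs_lmul; rewrite // mulg1.
have [[|n] [n_gt0 Bsn]] := totally_bounded_recurrence s nW => //.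
by exists (s ^+ n); split; [exists n | move: Bsn; rewrite /= expgS mulKg].
Qed.

End TotallyBoundedGroup.

Lemma bohr_lawson_continuous_invg1 (G : topGroupType) :
  lawson G -> bohr_regular G -> {for 1, continuous (fun x : G => x^-1)}.
Proof.
move=> lawG [K [h [topK tbK hom_h [_ reg_h] _]]] U.
rewrite invg1 => /reg_h [F [closedF _ nF F_U]].
have [V [nV V_F semV]] := lawG _ nF.
have V1 : V 1 := nbhs_singleton nV.
apply: (@filterS _ _ _ V) nV => v Vv; apply: F_U.
have powers_F : range (fun n => h v ^+ n) `<=` F.
  move=> _ [n _ <-]; rewrite -group_homX //; apply: (V_F (v ^+ n)).
  by case: n => [|n] //; apply: subsemigroupX.
rewrite /preimage /= group_homV // (closure_id F).1 //.
exact: closureS powers_F _ (invg_closure_powers topK tbK (s := h v)).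
Qed.

Theorem corollary8 (G : topGroupType) :
  paratopological_group G -> lawson G -> bohr_regular G -> topological_group G.
Proof.
move=> paraG lawG bohrG; split => //.
apply: continuous_invg_from1; first exact: paraG.2.
exact: bohr_lawson_continuous_invg1.
Qed.
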